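(* Let $S=\{\rho_1=0<\rho_2<\cdots\}$ be an Arf numerical semigroup with conductor $c=\rho_r$, and for a positive integer $i$ put $p_i=c+\rho_{i+1}-1$. Then $\alpha(p_i)=i$. Moreover, if $i<r$, then $\beta(p_i)=i$ and $\#A[p_i]=2i$.
   Context: A numerical semigroup is a submonoid $S$ of $(\mathbb{N}_0,+)$ with finite complement, with elements listed increasingly. $S$ is Arf if $\rho_i+\rho_j-\rho_k\in S$ for all positive integers $i\ge j\ge k$. The conductor $c$ is the smallest integer such that all integers $\ge c$ lie in $S$, with $c=\rho_r$. For $\rho\in S$: $A[\rho]=\{p\in S:\ \rho-p\in S\}$, $\alpha(\rho)=\max\{j\ge1:\ \rho_1,\dots,\rho_j\in A[\rho]\}$ and $\beta(\rho)=\max\{j\ge1:\ \rho_1,\dots,\rho_j\in A[\rho]\ \text{and}\ 2\rho_j\le\rho\}$. *)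

From mathcomp Require Import all_boot.
Set Implicit Arguments. Unset Strict Implicit. Unset Printing Implicit Defensive.

Definition numerical_semigroup (S : pred nat) : Prop :=
  S 0 /\ (forall a b, S a -> S b -> S (a + b)) /\
  (exists N, forall n, N <= n -> S n).

Definition enumerates (S : pred nat) (rho : nat -> nat) : Prop :=
  (forall i j, 1 <= i -> i < j -> rho i < rho j) /\
  (forall n, S n <-> exists2 i, 1 <= i & rho i = n).

Definition Arf (S : pred nat) (rho : nat -> nat) : Prop :=
  forall i j k, 1 <= k -> k <= j -> j <= i -> S (rho i + rho j - rho k).

Definition is_conductor (S : pred nat) (c : nat) : Prop :=
  (forall n, c <= n -> S n) /\
  (forall m, (forall n, m <= n -> S n) -> c <= m).

Definition Aset (S : pred nat) (p : nat) : seq nat :=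
  [seq q <- iota 0 p.+1 | S q && S (p - q)].

Definition prefix_in_A (S : pred nat) (rho : nat -> nat) (p j : nat) : Prop :=
  forall k, 1 <= k <= j -> rho k \in Aset S p.

Definition alpha_is (S : pred nat) (rho : nat -> nat) (p a : nat) : Prop :=
  [/\ 1 <= a, prefix_in_A S rho p a &
      forall j, 1 <= j -> prefix_in_A S rho p j -> j <= a].

Definition beta_is (S : pred nat) (rho : nat -> nat) (p b : nat) : Prop :=
  [/\ 1 <= b, prefix_in_A S rho p b /\ 2 * rho b <= p &
      forall j, 1 <= j -> prefix_in_A S rho p j -> 2 * rho j <= p -> j <= b].

From mathcomp Require Import all_boot.
From mathcomp Require Import zify.

Set Implicit Arguments.
Unset Strict Implicit.
Unset Printing Implicit Defensive.

(* Write p = c + rho_(i+1) - 1.  For k <= i we have rho_k < rho_(i+1), so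
   p - rho_k >= c lies in S, while p - rho_(i+1) = c - 1 does not: this gives
   alpha(p) = i.  If q and p - q both lay in S above rho_(i+1), the Arf
   property applied to them and rho_(i+1) would put q + (p - q) - rho_(i+1)
   = c - 1 in S; hence A[p] = {rho_k, p - rho_k : 1 <= k <= i}, and these 2i
   numbers are distinct as soon as rho_i < c, i.e. i < r. *)

Lemma mem_Aset (S : pred nat) p q :
  (q \in Aset S p) = [&& q <= p, S q & S (p - q)].
Proof. by rewrite mem_filter mem_iota ltnS /= andbC. Qed.

Lemma Aset_sym (S : pred nat) p q : q \in Aset S p -> p - q \in Aset S p.
Proof.
rewrite !mem_Aset => /and3P[qp Sq Spq].
by rewrite leq_subr Spq subKn.
Qed.

Lemma conductor_pred_notin (S : pred nat) c :
  is_conductor S c -> 0 < c -> ~~ S c.-1.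
Proof.
move=> [S_ge_c c_min] c_gt0; apply/negP => Sc1.
suff: c <= c.-1 by lia.
apply: c_min => n; rewrite leq_eqVlt => /orP[/eqP <- // | lt_n].
by apply: S_ge_c; lia.
Qed.

Section ArfAset.

Variables (S : pred nat) (rho : nat -> nat) (c : nat).
Hypothesis rho_incr : forall i j, 1 <= i -> i < j -> rho i < rho j.
Hypothesis rho_enum : forall n, S n <-> exists2 i, 1 <= i & rho i = n.
Hypothesis c_cond : is_conductor S c.

Local Notation p i := (c + rho i.+1 - 1).
Local Notation rho_prefix i := (map rho (iota 1 i)).

Lemma S_rho k : 0 < k -> S (rho k).
Proof. by move=> k_gt0; apply/rho_enum; exists k. Qed.

Lemma rho_mono a b : 0 < a -> a <= b -> rho a <= rho b.
Proof.
move=> a_gt0; rewrite leq_eqVlt => /orP[/eqP -> // | ab].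
exact/ltnW/rho_incr.
Qed.

Lemma rho_inj a b : 0 < a -> 0 < b -> rho a = rho b -> a = b.
Proof.
move=> a_gt0 b_gt0 e; case: (ltngtP a b) => // [ab | ba].
- by have := rho_incr a_gt0 ab; lia.
- by have := rho_incr b_gt0 ba; lia.
Qed.

Lemma rho_in_Aset i k : 0 < k <= i -> rho k \in Aset S (p i).
Proof.
case/andP=> k_gt0 ki; have := rho_incr k_gt0 (ki : k < i.+1) => lt_k.
rewrite mem_Aset S_rho //; apply/andP; split; first lia.
by apply: c_cond.1; lia.
Qed.

Lemma rho_succ_notin_Aset i : 0 < i -> rho i.+1 \notin Aset S (p i).
Proof.
move=> i_gt0; rewrite mem_Aset; apply/negP => /and3P[le_p _ S_diff].
have c_gt0 : 0 < c by have := rho_incr (isT : 0 < 1) (i_gt0 : 1 < i.+1); lia.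
have e : p i - rho i.+1 = c.-1 by lia.
by move: S_diff; rewrite e; apply/negP/conductor_pred_notin.
Qed.

Lemma alpha_is_p i : 0 < i -> alpha_is S rho (p i) i.
Proof.
move=> i_gt0; split=> // [k | j j_gt0 in_A]; first exact: rho_in_Aset.
rewrite leqNgt; apply/negP => ij.
by move: (rho_succ_notin_Aset i_gt0); rewrite in_A // ij.
Qed.

Lemma beta_is_p i : 0 < i -> rho i < c -> beta_is S rho (p i) i.
Proof.
move=> i_gt0 rhoi_lt_c; have [_ in_A alpha_max] := alpha_is_p i_gt0.
split=> // [|j j_gt0 in_Aj _]; last exact: alpha_max.
by split=> //; have := rho_incr i_gt0 (ltnSn i); lia.
Qed.

Lemma rho_prefix_uniq i : uniq (rho_prefix i).
Proof.
rewrite map_inj_in_uniq ?iota_uniq // => a b.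
by rewrite !mem_iota => ha hb; apply: rho_inj; lia.
Qed.

Lemma rho_prefix_lt_succ i q : q \in rho_prefix i -> q < rho i.+1.
Proof. by case/mapP=> k; rewrite mem_iota => hk ->; apply: rho_incr; lia. Qed.

Hypothesis rho_Arf : Arf S rho.

Lemma Aset_rho_prefix i q :
  0 < i -> q \in Aset S (p i) ->
  (q \in rho_prefix i) || (p i - q \in rho_prefix i).
Proof.
move=> i_gt0 q_in; have := q_in; rewrite mem_Aset => /and3P[qp Sq Spq].
have [a a_gt0 ea] := (rho_enum q).1 Sq.
have [b b_gt0 eb] := (rho_enum _).1 Spq.
subst q.
have in_prefix k : 0 < k <= i -> rho k \in rho_prefix i.
  by move=> hk; apply: map_f; rewrite mem_iota; lia.
case: (leqP a i) => [ai | ia]; first by rewrite in_prefix ?a_gt0.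
case: (leqP b i) => [bi | ib]; first by rewrite -eb in_prefix ?b_gt0 ?orbT.
exfalso.
have le_a : rho i.+1 <= rho a := rho_mono (isT : 0 < i.+1) ia.
have le_b : rho i.+1 <= rho b := rho_mono (isT : 0 < i.+1) ib.
have c_gt0 : 0 < c by have := rho_incr (isT : 0 < 1) (i_gt0 : 1 < i.+1); lia.
have : S (rho a + rho b - rho i.+1).
  by case: (leqP b a) => ba; [apply: rho_Arf | rewrite addnC; apply: rho_Arf]; lia.
have -> : rho a + rho b - rho i.+1 = c.-1 by lia.
exact/negP/conductor_pred_notin.
Qed.

Lemma Aset_perm i :
  0 < i -> rho i < c ->
  perm_eq (Aset S (p i)) (rho_prefix i ++ map (fun q => p i - q) (rho_prefix i)).
Proof.
move=> i_gt0 rhoi_lt_c.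
have lt_c q : q \in rho_prefix i -> q < c.
  case/mapP=> k; rewrite mem_iota => hk ->.
  by have := rho_mono (_ : 0 < k) (_ : k <= i); lia.
apply: uniq_perm; first exact/filter_uniq/iota_uniq.
  rewrite cat_uniq rho_prefix_uniq map_inj_in_uniq ?rho_prefix_uniq ?andbT.
    apply/hasP => -[_ /mapP[q q_in ->] /lt_c].
    by have := rho_prefix_lt_succ q_in; lia.
  move=> x y /rho_prefix_lt_succ x_lt /rho_prefix_lt_succ y_lt; lia.
have prefix_in_Aset q : q \in rho_prefix i -> q \in Aset S (p i).
  by case/mapP=> k; rewrite mem_iota => hk ->; apply: rho_in_Aset; lia.
move=> q; rewrite mem_cat; apply/idP/idP => [q_in | /orP[/prefix_in_Aset // |]].
- case/orP: (Aset_rho_prefix i_gt0 q_in) => [-> // | pq_in].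
  apply/orP; right; apply/mapP; exists (p i - q) => //.
  by move: q_in; rewrite mem_Aset => /andP[qp _]; rewrite subKn.
- by case/mapP=> x /prefix_in_Aset x_in ->; apply: Aset_sym.
Qed.

Lemma size_Aset i : 0 < i -> rho i < c -> size (Aset S (p i)) = 2 * i.
Proof.
move=> i_gt0 rhoi_lt_c; rewrite (perm_size (Aset_perm i_gt0 rhoi_lt_c)).
by rewrite size_cat !size_map size_iota addnn mul2n.
Qed.

End ArfAset.

Theorem mainTheorem7 (S : pred nat) (rho : nat -> nat) (c r : nat) :
  numerical_semigroup S -> enumerates S rho -> Arf S rho ->
  is_conductor S c -> 1 <= r -> rho r = c ->
  forall i : nat, 1 <= i ->
    let p := c + rho i.+1 - 1 in
    alpha_is S rho p i /\
    (i < r -> beta_is S rho p i /\ size (Aset S p) = 2 * i).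
Proof.
move=> _ [rho_incr rho_enum] rho_Arf c_cond _ rho_r i i_gt0 p.
split; first exact: alpha_is_p.
move=> ir; have rhoi_lt_c : rho i < c by rewrite -rho_r; apply: rho_incr.
split; first exact: beta_is_p.
exact: size_Aset.
Qed.
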